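(* Let $c>0$ and $\lambda_1\le\lambda_2\le\dots\le\lambda_n$ be in $[0,1]$. The problem $\min_{w\in\Delta_n}\big(\|w\|_2^2+c(w^\top\lambda)^2\big)$ has a unique minimizer $w^*$, and it is given as follows. For $k\in[n]$ write $S_1(k)=\sum_{i\le k}\lambda_i$, $S_2(k)=\sum_{i\le k}\lambda_i^2$, and $\rho(k)=\frac{1+cS_2(k)}{cS_1(k)}$ (with $\rho(k)=+\infty$ if $S_1(k)=0$). Let $m$ be the largest $k\in[n]$ such that $\lambda_{j+1}<\rho(j)$ for all $1\le j<k$ (i.e., start from $k=1$ and increase $k$ while $k<n$ and $\lambda_{k+1}<\rho(k)$). Set \[ \beta=\frac{1+cS_2(m)}{m(1+cS_2(m))-cS_1(m)^2},\qquad \alpha=\frac{cS_1(m)\,\beta}{1+cS_2(m)}. \] Then $w^*_i=\beta-\alpha\lambda_i$ for $i\le m$ and $w^*_i=0$ for $i>m$. Moreover $w^*_i=(\beta'-c(w^{*\top}\lambda)\lambda_i)_+$ for all $i$ and a suitable scalar $\beta'$.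
   Context: $\Delta_n=\{w\in\mathbb R^n:w_i\ge0,\ \sum_iw_i=1\}$; $(x)_+=\max\{x,0\}$. *)

From HB Require Import structures.
From mathcomp Require Import all_boot all_order all_algebra.
Set Implicit Arguments. Unset Strict Implicit. Unset Printing Implicit Defensive.
Import Order.TTheory GRing.Theory Num.Theory.
Local Open Scope ring_scope.

Section Defs.
Variables (R : realFieldType) (n : nat).

Definition in_simplex (w : 'I_n -> R) : Prop :=
  (forall i, 0 <= w i) /\ \sum_(i < n) w i = 1.

Definition dotp (w v : 'I_n -> R) : R := \sum_(i < n) w i * v i.

Definition objective (c : R) (lam w : 'I_n -> R) : R :=
  \sum_(i < n) w i ^+ 2 + c * (dotp w lam) ^+ 2.

(* S_1(k), S_2(k): sums over the first k (1-based i <= k, i.e. 0-based i < k) *)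
Definition S1 (lam : 'I_n -> R) (k : nat) : R := \sum_(i < n | (i < k)%N) lam i.
Definition S2 (lam : 'I_n -> R) (k : nat) : R := \sum_(i < n | (i < k)%N) lam i ^+ 2.

(* "x < rho(k)" with rho(k) = (1 + c S2(k)) / (c S1(k)), and rho(k) = +oo if S1(k)=0 *)
Definition lt_rho (c : R) (lam : 'I_n -> R) (x : R) (k : nat) : bool :=
  if S1 lam k == 0 then true else x < (1 + c * S2 lam k) / (c * S1 lam k).

(* the condition on k in [n]: lambda_{j+1} < rho(j) for all 1 <= j < k.
   With 0-based indexing, lambda_{j+1} (1-based) is lam j for j : 'I_n. *)
Definition m_ok (c : R) (lam : 'I_n -> R) (k : nat) : bool :=
  [forall j : 'I_n, ((0 < j)%N && (j < k)%N) ==> lt_rho c lam (lam j) j].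

Definition m_star (c : R) (lam : 'I_n -> R) : nat :=
  \max_(k < n.+1 | (0 < k)%N && m_ok c lam k) k.

Definition beta_star (c : R) (lam : 'I_n -> R) : R :=
  let m := m_star c lam in
  (1 + c * S2 lam m) / (m%:R * (1 + c * S2 lam m) - c * S1 lam m ^+ 2).

Definition alpha_star (c : R) (lam : 'I_n -> R) : R :=
  let m := m_star c lam in
  c * S1 lam m * beta_star c lam / (1 + c * S2 lam m).

Definition w_star (c : R) (lam : 'I_n -> R) : 'I_n -> R :=
  fun i => if (i < m_star c lam)%N then beta_star c lam - alpha_star c lam * lam i else 0.

End Defs.

From HB Require Import structures.
From mathcomp Require Import all_boot all_order all_algebra.
From mathcomp Require Import ring lra.
From Stdlib Require Import FunctionalExtensionality.
Import Order.TTheory GRing.Theory Num.Theory.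
Local Open Scope ring_scope.

(* The objective is a strongly convex quadratic on the simplex.  Expanding it
   around a point w of the simplex satisfying the KKT conditions
   w_i = (b - c (w.lam) lam_i)_+ gives f(v) >= f(w) + |v - w|^2 for every v in
   the simplex, hence minimality and uniqueness.  For the candidate w*, field
   computations give sum w* = 1 and c (w*.lam) = alpha, so it remains to show
   that beta - alpha lam_i >= 0 exactly when i < m.  As alpha / beta =
   c S1(m) / (1 + c S2(m)), this means c S1(m) lam_i <= 1 + c S2(m) below m and
   the reverse inequality from m on; both follow from the threshold conditions
   at m - 1 and at m, using that lam is sorted.  The denominator of beta is
   positive by Cauchy-Schwarz, S1(m)^2 <= m S2(m). *)

Lemma sqr_sum_le_card (R : realFieldType) (I : finType) (A : pred I) (F : I -> R) :
  (\sum_(i in A) F i) ^+ 2 <= #|A|%:R * \sum_(i in A) F i ^+ 2.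
Proof.
set s := \sum_(i in A) F i; set q := \sum_(i in A) F i ^+ 2.
have row_sum i : \sum_(j in A) (F i - F j) ^+ 2 = #|A|%:R * F i ^+ 2 - 2 * F i * s + q.
  rewrite (eq_bigr (fun j => F i ^+ 2 - 2 * F i * F j + F j ^+ 2)); last first.
    by move=> j _; ring.
  by rewrite !big_split /= sumrN sumr_const -mulr_sumr -[_ *+ #|A|]mulr_natl.
have : 0 <= \sum_(i in A) \sum_(j in A) (F i - F j) ^+ 2.
  by apply: sumr_ge0 => i _; apply: sumr_ge0 => j _; exact: sqr_ge0.
rewrite (eq_bigr _ (fun i _ => row_sum i)) !big_split /= sumrN sumr_const.
rewrite -mulr_sumr -mulr_suml -mulr_sumr -[q *+ _]mulr_natl -/s -/q.
nra.
Qed.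

Lemma card_ord_lt (n m : nat) : (m <= n)%N -> #|[pred i : 'I_n | (i < m)%N]| = m.
Proof.
move=> le_mn.
by rewrite -sum1_card -(big_ord_widen _ (fun=> 1%N) le_mn) sum1_card card_ord.
Qed.

Lemma sum_ord_ltS (V : nmodType) (n : nat) (F : 'I_n -> V) (j : 'I_n) :
  \sum_(i < n | (i < j.+1)%N) F i = \sum_(i < n | (i < j)%N) F i + F j.
Proof.
rewrite (bigD1 j) //= addrC; congr (_ + _); apply: eq_bigl => i.
by rewrite ltnS ltn_neqAle andbC.
Qed.

Section Objective.
Variables (R : realFieldType) (n : nat) (c : R) (lam : 'I_n -> R).

Lemma objective_expand (v w : 'I_n -> R) :
  objective c lam w = objective c lam v + \sum_(i < n) (w i - v i) ^+ 2
    + c * (dotp w lam - dotp v lam) ^+ 2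
    + 2 * \sum_(i < n) (v i + c * dotp v lam * lam i) * (w i - v i).
Proof.
have sqr_split : \sum_(i < n) w i ^+ 2 = \sum_(i < n) v i ^+ 2
    + \sum_(i < n) (w i - v i) ^+ 2 + 2 * \sum_(i < n) v i * (w i - v i).
  by rewrite mulr_sumr -!big_split; apply: eq_bigr => i _ /=; ring.
have grad_split a : \sum_(i < n) (v i + a * lam i) * (w i - v i)
    = \sum_(i < n) v i * (w i - v i) + a * (dotp w lam - dotp v lam).
  by rewrite /dotp -sumrB mulr_sumr -big_split; apply: eq_bigr => i _ /=; ring.
by rewrite /objective sqr_split grad_split; ring.
Qed.

Lemma objective_ge_sqr_dist (v w : 'I_n -> R) : 0 <= c ->
  0 <= \sum_(i < n) (v i + c * dotp v lam * lam i) * (w i - v i) ->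
  objective c lam v + \sum_(i < n) (w i - v i) ^+ 2 <= objective c lam w.
Proof.
move=> c_ge0 grad_ge0; rewrite (objective_expand v w).
have : 0 <= c * (dotp w lam - dotp v lam) ^+ 2 by rewrite mulr_ge0 ?sqr_ge0.
lra.
Qed.

Lemma kkt_grad_ge0 (b : R) (v w : 'I_n -> R) :
  in_simplex v -> in_simplex w ->
  (forall i, v i = Num.max (b - c * dotp v lam * lam i) 0) ->
  0 <= \sum_(i < n) (v i + c * dotp v lam * lam i) * (w i - v i).
Proof.
move=> [_ v_sum] [w_ge0 w_sum] kkt; set a := c * dotp v lam in kkt *.
have -> : \sum_(i < n) (v i + a * lam i) * (w i - v i)
    = b * (\sum_(i < n) w i - \sum_(i < n) v i)
      + \sum_(i < n) (v i + a * lam i - b) * (w i - v i).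
  by rewrite -sumrB mulr_sumr -big_split; apply: eq_bigr => i _ /=; ring.
rewrite v_sum w_sum subrr mulr0 add0r; apply: sumr_ge0 => i _.
rewrite kkt; have [nonpos|pos] := leP (b - a * lam i) 0.
- by rewrite add0r subr0 mulr_ge0 // subr_ge0 -subr_le0.
- by rewrite subrK subrr mul0r.
Qed.

End Objective.

Section Threshold.
Variables (R : realFieldType) (n : nat) (c : R) (lam : 'I_n -> R).
Hypotheses (c_gt0 : 0 < c) (lam_ge0 : forall i, 0 <= lam i).

Lemma S1_ge0 k : 0 <= S1 lam k.
Proof. exact: sumr_ge0. Qed.

Lemma S2_ge0 k : 0 <= S2 lam k.
Proof. by apply: sumr_ge0 => i _; exact: sqr_ge0. Qed.

Lemma rho_num_gt0 k : 0 < 1 + c * S2 lam k.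
Proof. exact: ltr_wpDr (mulr_ge0 (ltW c_gt0) (S2_ge0 k)) ltr01. Qed.

Lemma lt_rhoE x k : lt_rho c lam x k = (c * S1 lam k * x < 1 + c * S2 lam k).
Proof.
rewrite /lt_rho; have [->|S1_neq0] := eqVneq (S1 lam k) 0.
  by rewrite mulr0 mul0r rho_num_gt0.
have cS1_gt0 : 0 < c * S1 lam k by rewrite mulr_gt0 // lt0r S1_neq0 S1_ge0.
by rewrite ltr_pdivlMr // [x * _]mulrC.
Qed.

Hypotheses (n_gt0 : (0 < n)%N)
  (lam_sorted : forall i j : 'I_n, (i <= j)%N -> lam i <= lam j).

Local Notation m := (m_star c lam).

Lemma m_starP : [/\ (0 < m)%N, (m <= n)%N, m_ok c lam m &
  forall k, (k <= n)%N -> (0 < k)%N -> m_ok c lam k -> (k <= m)%N].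
Proof.
pose P := fun k : 'I_n.+1 => (0 < k)%N && m_ok c lam k.
have P1 : P (Ordinal (n_gt0 : (1 < n.+1)%N)).
  rewrite /P /=; apply/forallP => j; apply/implyP => /andP[j_gt0].
  by rewrite ltnS leqn0 => /eqP j0; rewrite j0 in j_gt0.
rewrite /m_star (bigop.bigmax_eq_arg _ P1).
case: arg_maxnP => // k /andP[k_gt0 k_ok] k_max; split => //.
  by rewrite -ltnS.
move=> k' k'_le_n k'_gt0 k'_ok.
by apply: (k_max (Ordinal (k'_le_n : (k' < n.+1)%N))); apply/andP.
Qed.

Lemma below_m_star (i : 'I_n) : (i < m)%N ->
  c * S1 lam m * lam i <= 1 + c * S2 lam m.
Proof.
have [m_gt0 m_le_n ok_m _] := m_starP; move=> i_lt_m.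
have j_lt_n : (m.-1 < n)%N by rewrite prednK.
pose j := Ordinal j_lt_n.
have m_eq : m = j.+1 by rewrite /= prednK.
have rho_j : lt_rho c lam (lam j) j.
  have [j0|j_gt0] := posnP j.
    by rewrite /lt_rho /S1 j0 big_pred0 ?eqxx.
  by move/forallP/(_ j)/implyP: ok_m; apply; rewrite j_gt0 m_eq ltnSn.
have lam_i_le : lam i <= lam j by apply: lam_sorted; rewrite -ltnS -m_eq.
have cS1_ge0 : 0 <= c * S1 lam m := mulr_ge0 (ltW c_gt0) (S1_ge0 m).
apply: le_trans (ler_wpM2l cS1_ge0 lam_i_le) _.
move: rho_j; rewrite lt_rhoE m_eq /S1 /S2 !sum_ord_ltS.
nra.
Qed.

Lemma above_m_star (i : 'I_n) : (m <= i)%N ->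
  1 + c * S2 lam m <= c * S1 lam m * lam i.
Proof.
have [_ _ ok_m m_max] := m_starP; move=> m_le_i.
have m1_le_n : (m.+1 <= n)%N := leq_ltn_trans m_le_i (ltn_ord i).
(* m + 1 fails the threshold test, and the failure can only occur at m. *)
have : ~~ m_ok c lam m.+1.
  by apply/negP => ok; have := m_max _ m1_le_n (ltn0Sn _) ok; rewrite ltnn.
case/forallPn => j; rewrite negb_imply => /andP[/andP[j_gt0 j_le_m] rho_j].
have j_eq : nat_of_ord j = m.
  apply/eqP; rewrite eqn_leq -ltnS j_le_m leqNgt; apply/negP => j_lt_m.
  move/forallP/(_ j)/implyP: ok_m.
  by rewrite j_gt0 j_lt_m (negbTE rho_j) => /(_ isT).
move: rho_j; rewrite lt_rhoE j_eq -leNgt => /le_trans; apply.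
by rewrite ler_wpM2l ?(mulr_ge0 (ltW c_gt0) (S1_ge0 m)) // lam_sorted ?j_eq.
Qed.

Lemma beta_star_denom_gt0 : 0 < m%:R * (1 + c * S2 lam m) - c * S1 lam m ^+ 2.
Proof.
have [m_gt0 m_le_n _ _] := m_starP.
have card_m := @card_ord_lt n m m_le_n.
have cs : S1 lam m ^+ 2 <= m%:R * S2 lam m.
  by have := @sqr_sum_le_card R _ [pred i : 'I_n | (i < m)%N] lam; rewrite card_m.
have : 0 <= c * (m%:R * S2 lam m - S1 lam m ^+ 2).
  by apply: mulr_ge0; rewrite ?subr_ge0 // ltW.
have : 0 < m%:R :> R by rewrite ltr0n.
nra.
Qed.

Lemma beta_star_gt0 : 0 < beta_star c lam.
Proof. by rewrite divr_gt0 ?beta_star_denom_gt0 ?rho_num_gt0. Qed.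

Lemma w_star_max i :
  w_star c lam i = Num.max (beta_star c lam - alpha_star c lam * lam i) 0.
Proof.
have q_gt0 := rho_num_gt0 m; rewrite /w_star.
have -> : alpha_star c lam * lam i
    = beta_star c lam * (c * S1 lam m * lam i / (1 + c * S2 lam m)).
  by rewrite /alpha_star; ring.
case: ifP => [i_lt_m | /negbT i_ge_m].
- have t_le1 : c * S1 lam m * lam i / (1 + c * S2 lam m) <= 1.
    by rewrite ler_pdivrMr // mul1r below_m_star.
  by rewrite max_l //; rewrite subr_ge0 ger_pMr ?beta_star_gt0.
- have t_ge1 : 1 <= c * S1 lam m * lam i / (1 + c * S2 lam m).
    by rewrite ler_pdivlMr // mul1r above_m_star // leqNgt.
  by rewrite max_r //; rewrite subr_le0 ler_pMr ?beta_star_gt0.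
Qed.

Lemma sum_w_star : \sum_(i < n) w_star c lam i = 1.
Proof.
have [_ m_le_n _ _] := m_starP.
have D_neq0 := lt0r_neq0 beta_star_denom_gt0; have q_neq0 := lt0r_neq0 (rho_num_gt0 m).
set b := beta_star c lam; set a := alpha_star c lam.
transitivity (\sum_(i < n | (i < m)%N) (b - a * lam i)).
  by rewrite [RHS]big_mkcond.
rewrite sumrB -[\sum_(i | _) a * _]mulr_sumr.
rewrite (sumr_const [pred i : 'I_n | (i < m)%N]) card_ord_lt // -[b *+ m]mulr_natr.
rewrite -/(S1 lam m) /a /alpha_star /b /beta_star.
by field; rewrite q_neq0 D_neq0.
Qed.

Lemma c_dotp_w_star : c * dotp (w_star c lam) lam = alpha_star c lam.
Proof.
have q_neq0 := lt0r_neq0 (rho_num_gt0 m).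
set b := beta_star c lam; set a := alpha_star c lam.
have -> : dotp (w_star c lam) lam = b * S1 lam m - a * S2 lam m.
  transitivity (\sum_(i < n | (i < m)%N) (b * lam i - a * lam i ^+ 2)).
    rewrite [RHS]big_mkcond; apply: eq_bigr => i _; rewrite /w_star -/a -/b.
    by case: ifP => _; [ring | rewrite mul0r].
  by rewrite sumrB -!mulr_sumr.
by rewrite /a /alpha_star -/b; field.
Qed.

End Threshold.

Theorem mainTheorem3 (R : realFieldType) (n : nat) (c : R) (lam : 'I_n -> R)
    (hn : (0 < n)%N) (hc : 0 < c)
    (hlam01 : forall i, 0 <= lam i <= 1)
    (hsorted : forall i j : 'I_n, (i <= j)%N -> lam i <= lam j) :
  let ws := w_star c lam in
  [/\ in_simplex ws,
      (forall w, in_simplex w -> objective c lam ws <= objective c lam w),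
      (forall w, in_simplex w -> objective c lam w <= objective c lam ws -> w = ws) &
      exists beta' : R, forall i,
        ws i = Num.max (beta' - c * dotp ws lam * lam i) 0].
Proof.
move=> ws.
have lam_ge0 i : 0 <= lam i by case/andP: (hlam01 i).
have kkt i : ws i = Num.max (beta_star c lam - c * dotp ws lam * lam i) 0.
  by rewrite /ws c_dotp_w_star // w_star_max.
have ws_simplex : in_simplex ws.
  by split => [i | ]; [rewrite kkt le_max lexx orbT | exact: sum_w_star].
have dist_le w : in_simplex w ->
    objective c lam ws + \sum_(i < n) (w i - ws i) ^+ 2 <= objective c lam w.
  by move=> w_simplex; apply: objective_ge_sqr_dist (ltW hc) _; apply: kkt_grad_ge0.
have dist_ge0 w : 0 <= \sum_(i < n) (w i - ws i) ^+ 2.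
  by apply: sumr_ge0 => i _; exact: sqr_ge0.
split => //.
- by move=> w /dist_le; apply: le_trans; rewrite lerDl.
- move=> w /dist_le le_w w_le; apply: functional_extensionality => i.
  have dist0 : \sum_(i < n) (w i - ws i) ^+ 2 = 0.
    by apply/eqP; rewrite eq_le dist_ge0 andbT; lra.
  have /eqP := @psumr_eq0P _ _ xpredT _ (fun i _ => sqr_ge0 (w i - ws i)) dist0 i isT.
  by rewrite sqrf_eq0 subr_eq0 => /eqP.
- by exists (beta_star c lam).
Qed.
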